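(* Let $\mathcal{T}$ be a tower with $\mathbb{K}_0=\emptyset$ whose maps are elementary inclusions or elementary contractions (named by the naming convention below), of dimension $\Delta$ and with $n$ elementary inclusions; let $\mathcal{W}$ be its contracting forest with node costs $c$. Then every ascending path in $\mathcal{W}$ with endpoint $x$ has cost at most $2\cdot|E(x)|$, and every independent set of ascending paths in $\mathcal{W}$ has cost at most $2\cdot(\Delta+1)\cdot n$.
   Context: Elementary inclusion: $\mathbb{K}_{i+1}=\mathbb{K}_i\cup\{\sigma\}$, $\sigma\notin\mathbb{K}_i$. Elementary contraction of distinct vertices $u,v$: for one of them, say $v$, the vertex set of $\mathbb{K}_{i+1}$ is that of $\mathbb{K}_i$ minus $v$, $\phi_i(u)=\phi_i(v)=u$, identity elsewhere, $\mathbb{K}_{i+1}=\phi_i(\mathbb{K}_i)$. Dimension = maximal simplex dimension. Active small coning construction: $\hat{\mathbb{K}}_0=\emptyset$; vertices flagged active/inactive, simplex active iff all its vertices are; $\mathrm{Act}\overline{\mathrm{St}}(w,\hat{\mathbb{K}}_i)$ = active simplices of $\hat{\mathbb{K}}_i$ in the closed star of $w$; inclusion adds $\sigma$ (new vertex active); contraction of $u,v$ with $|\mathrm{Act}\overline{\mathrm{St}}(u,\hat{\mathbb{K}}_i)|\le|\mathrm{Act}\overline{\mathrm{St}}(v,\hat{\mathbb{K}}_i)|$ sets $\hat{\mathbb{K}}_{i+1}=\hat{\mathbb{K}}_i\cup\{\{v\}\cup\tau:\tau\in\mathrm{Act}\overline{\mathrm{St}}(u,\hat{\mathbb{K}}_i)\}$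 and marks $u$ inactive (symmetric otherwise). Naming convention: each contraction maps $u,v$ to the vertex not marked inactive. Contracting forest $\mathcal{W}$: start empty; a vertex inclusion of $w$ adds a single-node tree labeled $w$; inclusions of higher simplices change nothing; a contraction of $u,v$ makes the current roots labeled $u,v$ children of a new root labeled with the image vertex. An internal node $x$ corresponding to contraction $\phi_i$ has cost $c(x)=|\hat{\mathbb{K}}_{i+1}\setminus\hat{\mathbb{K}}_i|$; leaves cost $0$. $\Sigma$: the $n$ simplices added at inclusions; each vertex of $\sigma\in\Sigma$ added by $\phi_i$ corresponds to the root of the forest after step $i$ labeled with it; $E(x)$ = those $\sigma\in\Sigma$ with a vertex whose node lies in the subtree rooted at $x$. An ascending path $(x_1,\dots,x_L)$, $L\ge1$, has $x_{k+1}$ the parent of $x_k$; $x_L$ is its endpoint; its cost is the sum of costs of its nodes. A set of ascending paths is independent if their endpoints are pairwise distinct and no endpoint is a proper ancestor of another; its cost is the sum of the path costs. *)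

From HB Require Import structures.
From mathcomp Require Import all_boot all_order.
From mathcomp Require Import finmap.
Set Implicit Arguments. Unset Strict Implicit. Unset Printing Implicit Defensive.
Local Open Scope fset_scope.

(* Vertices are natural numbers; a simplex is a nonempty finite set of
   vertices; a complex is a finite set of simplices. *)
Definition simplex := {fset nat}.
Definition cplx := {fset {fset nat}}.

Definition verts (K : cplx) : {fset nat} := fcover K.

(* Elementary operations of a tower.
   [Incl s] : elementary inclusion of the simplex s.
   [Contr u v] : elementary contraction of the (distinct) vertices u, v;
   which of u, v survives is decided by the active small coning
   construction (naming convention): if |ActSt(u)| <= |ActSt(v)| then u is
   marked inactive and u,v are mapped to v, otherwise v is marked inactive
   and u,v are mapped to u. *)
Inductive op := Incl of {fset nat} | Contr of nat & nat.

Definition is_incl (o : op) : bool := if o is Incl _ then true else false.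

(* state after a number of steps:
   K     : the complex K_i of the tower
   Kh    : the coning complex \hat K_i
   inact : the set of vertices flagged inactive
   roots : roots w = Some x iff the current root of the contracting forest
           labeled w is the node x (nodes are named by the index of the
           step that created them)
   par   : the parent function of the forest built so far *)
Record state := State {
  K : cplx; Kh : cplx; inact : {fset nat};
  roots : nat -> option nat; par : nat -> option nat }.

Definition state0 : state :=
  State fset0 fset0 fset0 (fun _ => None) (fun _ => None).

Definition active (I : {fset nat}) (t : {fset nat}) : bool := fdisjoint t I.

Definition ActSt (w : nat) (Kh : cplx) (I : {fset nat}) : cplx :=
  [fset t in Kh | (t `|` [fset w] \in Kh) && active I t].

Definition phi (d z : nat) (s : {fset nat}) : {fset nat} :=
  [fset (if x == d then z else x) | x in s].

Definition dead (s : state) (u v : nat) : nat :=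
  if #|` ActSt u (Kh s) (inact s)| <= #|` ActSt v (Kh s) (inact s)| then u else v.
Definition surv (s : state) (u v : nat) : nat :=
  if #|` ActSt u (Kh s) (inact s)| <= #|` ActSt v (Kh s) (inact s)| then v else u.

Definition step (i : nat) (o : op) (s : state) : state :=
  match o with
  | Incl sg =>
      let vx := #|` sg| == 1 in
      State (sg |` K s) (sg |` Kh s)
            (if vx then inact s `\` sg else inact s)
            (fun x => if vx && (x \in sg) then Some i else roots s x)
            (par s)
  | Contr u v =>
      let d := dead s u v in
      let z := surv s u v in
      State [fset phi d z t | t in K s]
            (Kh s `|` [fset (z |` t) | t in ActSt d (Kh s) (inact s)])
            (d |` inact s)
            (fun x => if x == d then None else if x == z then Some i
                      else roots s x)
            (fun y => if (Some y == roots s d) || (Some y == roots s z)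
                      then Some i else par s y)
  end.

Definition dflt_op : op := Incl fset0.

Fixpoint st_at (ops : seq op) (k : nat) : state :=
  match k with
  | 0 => state0
  | k'.+1 => step k' (nth dflt_op ops k') (st_at ops k')
  end.

Definition Kc (ops : seq op) (i : nat) : cplx := K (st_at ops i).

(* validity of a tower starting from K_0 = empty.  Vertex inclusions use
   fresh vertex names (never used before in the tower). *)
Definition valid_tower (ops : seq op) : Prop :=
  forall i, i < size ops ->
  match nth dflt_op ops i with
  | Incl sg =>
      [/\ sg != fset0, sg \notin Kc ops i,
          (forall t : {fset nat}, t != fset0 -> t `<` sg -> t \in Kc ops i) &
          (#|` sg| = 1 -> forall j, j <= i -> forall x, x \in sg ->
               x \notin verts (Kc ops j))]
  | Contr u v => [/\ u != v, u \in verts (Kc ops i) & v \in verts (Kc ops i)]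
  end.

Definition n_incl (ops : seq op) : nat := count is_incl ops.

Definition tower_dim (ops : seq op) : nat :=
  \max_(i < (size ops).+1) \max_(s <- Kc ops i) (#|` s| - 1).

Definition is_node (ops : seq op) (x : nat) : bool :=
  (x < size ops) &&
  match nth dflt_op ops x with
  | Incl sg => #|` sg| == 1
  | Contr _ _ => true
  end.

Definition parent (ops : seq op) (x : nat) : option nat :=
  par (st_at ops (size ops)) x.

Definition cost (ops : seq op) (x : nat) : nat :=
  match nth dflt_op ops x with
  | Contr _ _ => #|` Kh (st_at ops x.+1) `\` Kh (st_at ops x)|
  | Incl _ => 0
  end.

Fixpoint up (ops : seq op) (k : nat) (y : nat) : option nat :=
  match k with
  | 0 => Some y
  | k'.+1 => obind (parent ops) (up ops k' y)
  end.

(* Since parents have strictly larger indices than their children and all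
   nodes are < size ops, ancestors are reached in at most size ops steps. *)
Definition in_subtree (ops : seq op) (x y : nat) : bool :=
  [exists k : 'I_(size ops).+1, up ops k y == Some x].

Definition in_E (ops : seq op) (x i : nat) : bool :=
  match nth dflt_op ops i with
  | Incl sg => [exists w : sg, if roots (st_at ops i.+1) (val w) is Some y
                                then in_subtree ops x y else false]
  | Contr _ _ => false
  end.

Definition E (ops : seq op) (x : nat) : seq nat :=
  [seq i <- iota 0 (size ops) | in_E ops x i].

Definition ascending (ops : seq op) (p : seq nat) : bool :=
  (p != [::]) && all (is_node ops) p &&
  sorted (fun a b => parent ops a == Some b) p.

Definition endpoint (p : seq nat) : nat := last 0 p.

Definition path_cost (ops : seq op) (p : seq nat) : nat :=
  \sum_(x <- p) cost ops x.

Definition independent (ops : seq op) (P : seq (seq nat)) : bool :=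
  all (ascending ops) P && uniq (map endpoint P) &&
  all (fun p => all (fun q =>
         ~~ ((endpoint p != endpoint q) &&
             in_subtree ops (endpoint p) (endpoint q))) P) P.

Definition set_cost (ops : seq op) (P : seq (seq nat)) : nat :=
  \sum_(p <- P) path_cost ops p.

(* Contracting u and v adds the cones z |` t over the simplices t of the
   closed star of the dead vertex d that avoid the survivor z.  As the naming
   convention gives d the smaller active closed star, their number is at most
   twice the number of simplices of K_i containing u but not v, and also at
   most twice the number containing v but not u.  Every simplex of K_i is the
   current image of an included simplex, so the cost of a node is charged to
   inclusions whose image separates u from v.  Along an ascending path, the
   contraction at x is charged to inclusions whose image avoids the vertex
   labelling the previous node, while all inclusions charged before contain
   that vertex; the charged sets are therefore disjoint, and all lie in E of
   the endpoint.  For independent paths, an inclusion sigma lies in E(x) for at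
   most |sigma| <= Delta + 1 endpoints x, one per vertex of sigma, since the
   endpoints whose subtrees contain a given node form a chain. *)

From Pilot Require Import Defs.
From mathcomp Require Import all_boot all_order.
From mathcomp Require Import finmap.
(* Re-imported so that [roots] denotes the forest roots of Defs, not fingraph's. *)
Import Defs.
Set Implicit Arguments. Unset Strict Implicit. Unset Printing Implicit Defensive.
Local Open Scope fset_scope.
Local Open Scope nat_scope.

Lemma leq_sum_seq (T : eqType) (s : seq T) (f g : T -> nat) :
  {in s, forall x, f x <= g x} -> \sum_(x <- s) f x <= \sum_(x <- s) g x.
Proof.
by move=> h; rewrite big_seq_cond [X in _ <= X]big_seq_cond; apply: leq_sum => x /andP[/h].
Qed.

Lemma count_sum (T : Type) (a : pred T) (s : seq T) : count a s = \sum_(x <- s) a x.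
Proof. by rewrite -sum1_count big_mkcond. Qed.

Lemma count_le1 (T U : eqType) (s : seq T) (e : T -> U) (a : pred T) :
  uniq (map e s) -> {in s &, forall p q, a p -> a q -> e p = e q} -> count a s <= 1.
Proof.
elim: s => [//|x s IH] /= /andP[xs us] h.
have {}IH : count a s <= 1 by apply: IH => // p q ps qs; apply: h; rewrite inE ?ps ?qs orbT.
case ax: (a x) => /=; last by rewrite add0n.
rewrite add1n ltnS leqn0 eqn0Ngt -has_count; apply/negP => /hasP[q qs aq].
by move: xs; rewrite (h x q) ?map_f ?inE ?eqxx ?qs ?orbT.
Qed.

(** * Simplicial complexes and vertex identification *)

Lemma vertsP (K0 : cplx) w :
  reflect (exists2 s, s \in K0 & w \in s) (w \in verts K0).
Proof.
apply: (iffP (bigfcupP _ _ _ _)) => [[s /andP[sK _] ws]|[s sK ws]]; first by exists s.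
by exists s; rewrite ?sK.
Qed.

Lemma verts_U1 (K0 : cplx) s w :
  (w \in verts (s |` K0)) = (w \in s) || (w \in verts K0).
Proof.
apply/vertsP/orP => [[s' /fset1UP[->|s'K] ws']|[ws|/vertsP[s' s'K ws']]].
- by left.
- by right; apply/vertsP; exists s'.
- by exists s => //; rewrite fset1U1.
- by exists s' => //; rewrite fset1Ur.
Qed.

Lemma in_phi d z s x : d != z ->
  (x \in phi d z s) = (x != d) && ((x \in s) || (x == z) && (d \in s)).
Proof.
move=> dz; apply/imfsetP/idP => /= [[y ys ->]|/andP[xd /orP[xs|/andP[/eqP-> ds]]]].
- by case: ifP => [/eqP yd|->]; rewrite ?ys // eq_sym dz eqxx -yd ys orbT.
- by exists x; rewrite ?(negbTE xd).
- by exists d; rewrite ?eqxx.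
Qed.

Lemma phi_notin d z s : d \notin s -> phi d z s = s.
Proof.
move=> ds; apply/fsetP=> x; apply/imfsetP/idP => /= [[y ys ->]|xs].
  by case: eqP => [yd|//]; rewrite -yd ys in ds.
by exists x => //; case: eqP => // xd; rewrite -xd xs in ds.
Qed.

Lemma phi_in d z s : d != z -> d \in s -> phi d z s = z |` (s `\ d).
Proof.
move=> dz ds; apply/fsetP=> x; rewrite in_phi // in_fset1U in_fsetD1 ds andbT.
by case: (x =P z) => [->|_]; rewrite ?orbF // eq_sym dz orbT.
Qed.

Lemma verts_phi (K0 : cplx) d z w : d != z -> z \in verts K0 ->
  (w \in verts [fset phi d z x | x in K0]) = (w != d) && ((w == z) || (w \in verts K0)).
Proof.
move=> dz /vertsP[xz xzK zxz]; apply/vertsP/andP.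
  case=> s1 /imfsetP[x xK ->]; rewrite in_phi // => /andP[wd /orP[wx|/andP[-> _]]] //.
  by split => //; apply/orP; right; apply/vertsP; exists x.
case=> wd /orP[/eqP ->|/vertsP[x xK wx]].
  by exists (phi d z xz); [apply/imfsetP; exists xz | rewrite in_phi // eqxx zxz eq_sym dz].
by exists (phi d z x); [apply/imfsetP; exists x | rewrite in_phi // wd wx].
Qed.

Definition is_complex (K0 : cplx) : Prop :=
  fset0 \notin K0 /\
  forall s s', s \in K0 -> s' `<=` s -> s' != fset0 -> s' \in K0.

Lemma vertex_in_complex (K0 : cplx) w :
  is_complex K0 -> w \in verts K0 -> [fset w] \in K0.
Proof.
case=> _ cl /vertsP[s sK ws]; apply: (cl _ _ sK).
  by apply/fsubsetP=> x /fset1P ->.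
by apply/fset0Pn; exists w; rewrite inE.
Qed.

Lemma vertex_proper_face (K0 : cplx) sg w :
  (forall t, t != fset0 -> t `<` sg -> t \in K0) -> #|` sg| != 1 -> w \in sg ->
  [fset w] \in K0.
Proof.
move=> faces sg1 ws; apply: faces; first by apply/fset0Pn; exists w; rewrite inE.
rewrite fproperEneq fsub1set ws andbT.
by apply: contra sg1 => /eqP <-; rewrite cardfs1.
Qed.

Lemma complex_U1 (K0 : cplx) sg : is_complex K0 -> sg != fset0 ->
  (forall t, t != fset0 -> t `<` sg -> t \in K0) -> is_complex (sg |` K0).
Proof.
move=> [K0ne cl] sg0 faces; split; first by rewrite in_fset1U negb_or eq_sym sg0.
move=> s s' /fset1UP[->|sK] s's s'0; last by rewrite fset1Ur // (cl _ _ sK).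
case: (s' =P sg) => [->|ne]; first exact: fset1U1.
by rewrite fset1Ur // faces // fproperEneq s's andbT; apply/eqP.
Qed.

Lemma complex_phi (K0 : cplx) d z : is_complex K0 -> d != z ->
  is_complex [fset phi d z t | t in K0].
Proof.
move=> [K0ne cl] dz; split.
  apply/negP => /imfsetP[x xK /esym x0].
  have /fset0Pn[y yx] : x != fset0 by apply: contraNneq K0ne => <-.
  have : (if y == d then z else y) \in phi d z x by apply/imfsetP; exists y.
  by rewrite x0 in_fset0.
move=> s1 s' /imfsetP[x xK ->] s'x s'0.
set s'' := [fset y in x | (if y == d then z else y) \in s'].
have preim y' : y' \in s' -> exists2 y, y \in s'' & y' = if y == d then z else y.
  move=> ys'; have /imfsetP[y yx def_y'] : y' \in phi d z x by apply: (fsubsetP s'x).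
  by exists y; rewrite // !inE yx -def_y'.
apply/imfsetP; exists s''.
  apply: (cl _ _ xK); first exact: fset_sub.
  by case/fset0Pn: s'0 => y' /preim[y ys _]; apply/fset0Pn; exists y.
apply/fsetP => y'; apply/idP/imfsetP => [/preim[y ys ->]|[y]]; first by exists y.
by rewrite !inE => /andP[_ fy] ->.
Qed.

(** * Closed stars and the coning complex *)

Definition cstar (K0 : cplx) w : cplx := [fset t in K0 | t `|` [fset w] \in K0].

Section StarCounting.

Variable K0 : cplx.

Definition cstar_with w w' : cplx := [fset t in cstar K0 w | w' \in t].
Definition cstar_wo w w' : cplx := [fset t in cstar K0 w | w' \notin t].
Definition star_wo w w' : cplx := [fset s in K0 | (w \in s) && (w' \notin s)].

Lemma card_cstar w w' : #|` cstar K0 w| = #|` cstar_with w w'| + #|` cstar_wo w w'|.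
Proof. by rewrite !card_fset_sum1 (big_fsetID _ (fun t : {fset nat} => w' \in t)). Qed.

(* A simplex of the closed star of w avoiding w' either contains w, or is
   s minus w for a simplex s of the open star of w avoiding w'. *)
Lemma card_cstar_wo w w' : w != w' -> #|` cstar_wo w w'| <= 2 * #|` star_wo w w'|.
Proof.
move=> ww'; rewrite mul2n -addnn.
set A := star_wo w w'.
apply: leq_trans (_ : #|` A `|` [fset s `\ w | s in A]| <= _).
  apply: fsubset_leq_card; apply/fsubsetP => t; rewrite !inE.
  case/andP=> /andP[tK twK] w't; case: (boolP (w \in t)) => wt; first by rewrite tK w't.
  apply/orP; right; apply/imfsetP; exists (t `|` [fset w]).
    by rewrite !inE twK eqxx orbT (negbTE w't) eq_sym (negbTE ww').
  by rewrite fsetDUl fsetDv fsetU0 mem_fsetD1.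
by apply: leq_trans (leq_card_fsetU _ _) _; rewrite leq_add2l leq_imfset_card.
Qed.

Hypothesis K0c : is_complex K0.

Lemma card_cstar_with d z : d != z -> #|` cstar_with z d| <= #|` cstar_with d z|.
Proof.
move=> dz; set f := fun t : {fset nat} => if z \in t then t else z |` (t `\ d).
have inD t : t \in cstar_with z d -> [/\ t \in K0, t `|` [fset z] \in K0 & d \in t].
  by rewrite !inE => /andP[/andP[-> ->] ->].
have <- : #|` [fset f t | t in cstar_with z d]| = #|` cstar_with z d|.
  rewrite card_in_imfset //= => t1 t2 /inD[_ _ d1] /inD[_ _ d2]; rewrite /f.
  have zd : (d == z) = false by apply/negbTE.
  case: (boolP (z \in t1)) => z1; case: (boolP (z \in t2)) => z2 // e.
  - by move: d1; rewrite e !inE eqxx zd.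
  - by move: d2; rewrite -e !inE eqxx zd.
  - rewrite -[t1](fsetD1K d1) -[t2](fsetD1K d2); congr (_ |` _).
    apply/fsetP => y; move/fsetP/(_ y): e; rewrite !inE.
    by case: (y =P z) => [->|]; rewrite ?(negbTE z1) ?(negbTE z2) ?andbF.
apply: fsubset_leq_card; apply/fsubsetP => t' /imfsetP[t /inD[tK tzK dt] ->].
rewrite /f; case: (boolP (z \in t)) => zt.
  rewrite !inE zt tK /= andbT.
  by have /fsetUidPl -> : [fset d] `<=` t by rewrite fsub1set.
have e1 : z |` (t `\ d) `|` [fset d] = t `|` [fset z].
  apply/fsetP => y; rewrite !inE; case: (y =P d) => [->|] /=; first by rewrite dt orbT.
  by rewrite orbF orbC.
rewrite !inE e1 tzK eqxx andbT /= andbT; apply: (K0c.2 _ _ tzK).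
  by apply/fsubsetP => y; rewrite !inE => /orP[->|/andP[_ ->]]; rewrite ?orbT.
by apply/fset0Pn; exists z; rewrite !inE eqxx.
Qed.

Lemma card_cstar_wo_mono d z : d != z ->
  #|` cstar K0 d| <= #|` cstar K0 z| -> #|` cstar_wo d z| <= #|` cstar_wo z d|.
Proof.
move=> dz; rewrite (card_cstar d z) (card_cstar z d) => le_star.
rewrite -(leq_add2l #|` cstar_with d z|); apply: leq_trans le_star _.
by rewrite leq_add2r card_cstar_with.
Qed.

End StarCounting.

Definition active_part (Kh0 : cplx) (I : {fset nat}) : cplx :=
  [fset s in Kh0 | active I s].

Lemma active_part_U1 (Kh0 : cplx) I sg :
  active I sg -> active_part (sg |` Kh0) I = sg |` active_part Kh0 I.
Proof.
move=> act; apply/fsetP => s; rewrite /active_part !inE.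
by case: (s =P sg) => [->|] //=; rewrite act.
Qed.

Section ActivePart.

Variables (Kh0 K0 : cplx) (I : {fset nat}).
Hypotheses (K0c : is_complex K0) (KhK : active_part Kh0 I = K0).

Lemma in_active_part s : (s \in Kh0) && active I s = (s \in K0).
Proof. by rewrite -KhK !inE. Qed.

Lemma vertex_active w : w \in verts K0 -> w \notin I.
Proof.
move/(vertex_in_complex K0c); rewrite -in_active_part => /andP[_].
by rewrite /active fdisjoint1X.
Qed.

Lemma ActSt_cstar w : w \in verts K0 -> ActSt w Kh0 I = cstar K0 w.
Proof.
move=> wK; apply/fsetP => x; rewrite !inE -!in_active_part /active.
rewrite fdisjointUX fdisjoint1X vertex_active // andbT.
by case: (x \in Kh0); case: (_ \in Kh0); case: fdisjoint.
Qed.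

Lemma active_part_cone d z : d \in verts K0 -> z \in verts K0 -> d != z ->
  active_part (Kh0 `|` [fset z |` t | t in ActSt d Kh0 I]) (d |` I) =
  [fset phi d z t | t in K0].
Proof.
move=> dK zK dz; apply/fsetP => s.
rewrite /active_part !inE /active fdisjointXU fdisjointX1.
apply/idP/idP.
  case/and3P=> /orP[sKh|/imfsetP[x xA ->]] ds act.
    by apply/imfsetP; exists s; rewrite ?phi_notin // -in_active_part sKh.
  move: xA; rewrite ActSt_cstar // !inE => /andP[xK xdK].
  have dx : d \notin x by apply: contra ds; rewrite in_fset1U => ->; rewrite orbT.
  apply/imfsetP; exists (x `|` [fset d]) => //.
  by rewrite phi_in ?inE ?eqxx ?orbT // fsetDUl fsetDv fsetU0 mem_fsetD1.
case/imfsetP => x xK ->.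
have -> : d \notin phi d z x by rewrite in_phi // eqxx.
have -> : fdisjoint (phi d z x) I.
  apply/fdisjointP => y; rewrite in_phi // => /andP[_ /orP[yx|/andP[/eqP-> _]]].
    by apply: vertex_active; apply/vertsP; exists x.
  exact: vertex_active.
rewrite !andbT; case: (boolP (d \in x)) => dx; last first.
  by rewrite phi_notin //; move: xK; rewrite -in_active_part => /andP[->].
rewrite phi_in //; case: (x `\ d =P fset0) => [->|ne].
  by rewrite fsetU0; move: (vertex_in_complex K0c zK); rewrite -in_active_part => /andP[->].
have xdK : x `\ d \in K0 by apply: K0c.2 xK _ _; [exact: fsubsetDl | apply/eqP].
apply/orP; right; apply/imfsetP; exists (x `\ d) => //.
by rewrite ActSt_cstar // !inE xdK /= fsetUC fsetD1K.
Qed.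

Lemma card_cone_new d z : d \in verts K0 ->
  #|` (Kh0 `|` [fset z |` t | t in ActSt d Kh0 I]) `\` Kh0| <= #|` cstar_wo K0 d z|.
Proof.
move=> dK; apply: (@leq_trans #|` [fset z |` t | t in cstar_wo K0 d z]|);
  last exact: leq_imfset_card.
apply: fsubset_leq_card; apply/fsubsetP => x; rewrite in_fsetD.
case/andP=> xKh /fsetUP[xKh'|/imfsetP[t]]; first by rewrite xKh' in xKh.
rewrite ActSt_cstar // !inE => /andP[tK tdK] xe; apply/imfsetP; exists t => //.
rewrite !inE tK tdK /=; apply: contra xKh => zt.
have -> : x = t by rewrite xe; apply/fsetUidPr; rewrite fsub1set.
by move: tK; rewrite -in_active_part => /andP[].
Qed.

End ActivePart.

(** * Invariants of the tower *)

Definition incl_simplex (o : op) : {fset nat} := if o is Incl s then s else fset0.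

Definition step_map (o : op) (s : state) (x : {fset nat}) : {fset nat} :=
  match o with Contr u v => phi (dead s u v) (surv s u v) x | Incl _ => x end.

(* [img ops j t] is the image in K_t of the simplex included at step j;
   meaningful only for j < t (it is the included simplex itself when t <= j). *)
Fixpoint img (ops : seq op) (j t : nat) : {fset nat} :=
  match t with
  | 0 => incl_simplex (nth dflt_op ops j)
  | t'.+1 => if t' <= j then incl_simplex (nth dflt_op ops j)
             else step_map (nth dflt_op ops t') (st_at ops t') (img ops j t')
  end.

Lemma img_step ops j t : j < t ->
  img ops j t.+1 = step_map (nth dflt_op ops t) (st_at ops t) (img ops j t).
Proof. by move=> jt /=; rewrite leqNgt jt. Qed.

Lemma img_self ops j : img ops j j.+1 = incl_simplex (nth dflt_op ops j).
Proof. by rewrite /= leqnn. Qed.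

Lemma dead_survP s u v :
  (dead s u v = u /\ surv s u v = v) \/ (dead s u v = v /\ surv s u v = u).
Proof. by rewrite /dead /surv; case: ifP; [left|right]. Qed.

Lemma card_ActSt_dead_surv s u v :
  #|` ActSt (dead s u v) (Kh s) (inact s)| <= #|` ActSt (surv s u v) (Kh s) (inact s)|.
Proof. by rewrite /dead /surv; case: ifP => // /negbT; rewrite -ltnNge => /ltnW. Qed.

Lemma root_dead_surv s u v w y : (w == dead s u v) || (w == surv s u v) ->
  roots s w = Some y -> roots s u = Some y \/ roots s v = Some y.
Proof. by case: (dead_survP s u v) => -[-> ->] /orP[] /eqP ->; auto. Qed.

Record tower_inv (ops : seq op) (t : nat) : Prop := TowerInv {
  inv_complex : is_complex (Kc ops t);
  inv_active : active_part (Kh (st_at ops t)) (inact (st_at ops t)) = Kc ops t;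
  inv_inact : forall w, w \in inact (st_at ops t) ->
    exists2 j, j <= t & w \in verts (Kc ops j);
  inv_roots : forall w, (roots (st_at ops t) w != None) = (w \in verts (Kc ops t));
  inv_roots_lt : forall w y, roots (st_at ops t) w = Some y -> y < t;
  inv_roots_inj : forall w w' y, roots (st_at ops t) w = Some y ->
    roots (st_at ops t) w' = Some y -> w = w';
  inv_par : forall y p, par (st_at ops t) y = Some p ->
    [/\ y < p, p < t, forall w, roots (st_at ops t) w != Some y &
      exists u v, nth dflt_op ops p = Contr u v /\
        (roots (st_at ops p) u = Some y \/ roots (st_at ops p) v = Some y)];
  inv_img_surj : forall s, s \in Kc ops t ->
    exists2 j, j < t & is_incl (nth dflt_op ops j) && (img ops j t == s);
  inv_img : forall j, j < t -> is_incl (nth dflt_op ops j) -> img ops j t \in Kc ops t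
}.

Lemma tower_inv0 ops : tower_inv ops 0.
Proof.
split; rewrite /Kc //=; first by apply/fsetP => s; rewrite /active_part !inE.
by move=> w; apply/esym/negbTE/vertsP => -[s]; rewrite in_fset0.
Qed.

Lemma tower_inv_incl ops t sg : nth dflt_op ops t = Incl sg ->
  [/\ sg != fset0, sg \notin Kc ops t,
     (forall t0 : {fset nat}, t0 != fset0 -> t0 `<` sg -> t0 \in Kc ops t) &
     (#|` sg| = 1 -> forall j, j <= t -> forall x,
        x \in sg -> x \notin verts (Kc ops j))] ->
  tower_inv ops t -> tower_inv ops t.+1.
Proof.
move=> Ho [sg0 sgK faces fresh] I.
have Hst : st_at ops t.+1 = step t (Incl sg) (st_at ops t) by rewrite /= Ho.
rewrite /Kc in sgK faces fresh *; set s := st_at ops t in Hst I sgK faces fresh *.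
have fresh_active : #|` sg| = 1 -> forall x, x \in sg -> x \notin inact s.
  move=> h1 x xs; apply/negP => /(inv_inact I) [j jt xj].
  by move: (fresh h1 j jt x xs); rewrite xj.
have sg_verts w : #|` sg| != 1 -> w \in sg -> w \in verts (K s).
  by move=> h1 ws; apply/vertsP; exists [fset w]; rewrite ?(vertex_proper_face faces) ?inE.
have sg_active : active (inact s) sg.
  apply/fdisjointP => w ws; case: (boolP (#|` sg| == 1)) => [/eqP h1|h1].
    exact: fresh_active.
  exact: (vertex_active (inv_complex I) (inv_active I) (sg_verts w h1 ws)).
have inact_sg : (if #|` sg| == 1 then inact s `\` sg else inact s) = inact s.
  case: ifP => // /eqP h1; apply/fsetP=> x; rewrite in_fsetD.
  by case: (boolP (x \in sg)) => // /(fresh_active h1) /negbTE ->.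
constructor; rewrite /Kc Hst /= ?inact_sg.
- by apply: complex_U1 => //; apply: inv_complex.
- by rewrite active_part_U1 // (inv_active I).
- by move=> w /(inv_inact I) [j jt wj]; exists j => //; exact: leqW.
- move=> w; rewrite verts_U1.
  case: (boolP (w \in sg)) => ws; last by rewrite andbF (inv_roots I).
  case: (boolP (#|` sg| == 1)) => //= h1.
  by rewrite (inv_roots I) sg_verts.
- move=> w y; case: ifP => [_ [<-]//|_ /(inv_roots_lt I)]; exact: leqW.
- move=> w w' y; case: ifP => [/andP[/cardfs1P[x ->]]|_].
    rewrite inE => /eqP -> [<-]; case: ifP => [/andP[_]|_ /(inv_roots_lt I)].
      by rewrite inE => /eqP ->.
    by rewrite ltnn.
  case: ifP => [_ /(inv_roots_lt I) + [ty]|_]; first by rewrite ty ltnn.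
  exact: (inv_roots_inj I).
- move=> y p /(inv_par I) [yp pt noroot ex]; split => //; first exact: leqW.
  move=> w; case: ifP => [_|_]; last exact: noroot.
  by apply/eqP => -[ty]; move: (ltn_trans yp pt); rewrite ty ltnn.
- move=> s1 /fset1UP[->|/(inv_img_surj I)[j jt /andP[ij /eqP ij']]].
    by exists t => //; rewrite leqnn Ho eqxx.
  by exists j; [exact: leqW | rewrite ij leqNgt jt Ho /= ij'].
- move=> j; rewrite ltnS leq_eqVlt => /orP[/eqP ->|jt] ij.
    by rewrite leqnn Ho fset1U1.
  by rewrite leqNgt jt Ho /= fset1Ur // (inv_img I).
Qed.

Lemma tower_inv_contr ops t u v : nth dflt_op ops t = Contr u v ->
  [/\ u != v, u \in verts (Kc ops t) & v \in verts (Kc ops t)] ->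
  tower_inv ops t -> tower_inv ops t.+1.
Proof.
move=> Ho [uv uK vK] I.
have Hst : st_at ops t.+1 = step t (Contr u v) (st_at ops t) by rewrite /= Ho.
rewrite /Kc in uK vK *; set s := st_at ops t in Hst I uK vK *.
set d := dead s u v; set z := surv s u v.
have duv : (d = u /\ z = v) \/ (d = v /\ z = u) by exact: dead_survP.
have [dK zK dz] : [/\ d \in verts (K s), z \in verts (K s) & d != z].
  by case: duv => -[-> ->]; split; rewrite // eq_sym.
have [Kc_t Kh_t] := (inv_complex I, inv_active I).
constructor; rewrite /Kc Hst /= -/d -/z.
- exact: complex_phi.
- exact: active_part_cone.
- move=> w /fset1UP[->|/(inv_inact I)[j jt wj]]; first by exists t.
  by exists j => //; apply: leqW.
- move=> w; rewrite verts_phi //; case: (w =P d) => [->|wd] //=.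
  by case: (w =P z) => //= _; rewrite (inv_roots I).
- move=> w y; case: ifP => // _; case: ifP => [_ [<-] //|_ /(inv_roots_lt I)].
  exact: leqW.
- move=> w w' y; case: (w =P d) => // wd; case: (w =P z) => [-> [<-]|wz].
    by case: (w' =P d) => // _; case: (w' =P z) => // _ /(inv_roots_lt I); rewrite ltnn.
  case: (w' =P d) => // _; case: (w' =P z) => [_ /(inv_roots_lt I) + [ty]|_].
    by rewrite ty ltnn.
  exact: (inv_roots_inj I).
- move=> y p; case: ifP => [hy [<-]|_ /(inv_par I) [yp pt noroot ex]]; last first.
    split => //; first exact: leqW.
    move=> w; case: (w =P d) => // _; case: (w =P z) => _; last exact: noroot.
    by apply/eqP => -[ty]; move: (ltn_trans yp pt); rewrite ty ltnn.
  have [yt rd] : y < t /\ (roots s d = Some y \/ roots s z = Some y).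
    by case/orP: hy => /eqP/esym h; split; rewrite ?h; auto; apply: inv_roots_lt h.
  split => //.
  + move=> w; case: (w =P d) => // wd; case: (w =P z) => [_|wz].
      by apply/eqP => -[ty]; rewrite ty ltnn in yt.
    by apply/eqP => rw; case: rd => /(inv_roots_inj I rw).
  + by exists u, v; split => //; case: duv => -[de ze]; rewrite -/s -de -ze; case: rd; auto.
- move=> s1 /imfsetP[x /(inv_img_surj I)[j jt /andP[ij /eqP ij']] ->].
  by exists j; [exact: leqW | rewrite ij leqNgt jt Ho /= ij'].
- move=> j; rewrite ltnS leq_eqVlt => /orP[/eqP ->|jt] ij; first by rewrite Ho in ij.
  by rewrite leqNgt jt Ho /=; apply/imfsetP; exists (img ops j t) => //; apply: (inv_img I).
Qed.

Lemma tower_inv_all ops : valid_tower ops -> forall t, t <= size ops -> tower_inv ops t.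
Proof.
move=> V; elim=> [|t IH] tn; first exact: tower_inv0.
have := V t tn; case Ho: (nth dflt_op ops t) => [sg|u v] h.
  by apply: (tower_inv_incl Ho h); apply: IH; apply: ltnW.
by apply: (tower_inv_contr Ho h); apply: IH; apply: ltnW.
Qed.

(** * The contracting forest and the charging argument *)

Inductive ancestor (ops : seq op) (x : nat) : nat -> Prop :=
| ancestor_refl : ancestor ops x x
| ancestor_up y p : parent ops y = Some p -> ancestor ops x p -> ancestor ops x y.

Lemma ancestor_trans ops x m y : ancestor ops x m -> ancestor ops m y -> ancestor ops x y.
Proof. by move=> xm; elim=> // y0 p e _ IH; apply: ancestor_up e IH. Qed.

Lemma ancestor_parent ops y p : parent ops y = Some p -> ancestor ops p y.
Proof. by move=> e; apply: ancestor_up e (ancestor_refl _ _). Qed.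

Lemma ancestor_total ops a b y :
  ancestor ops a y -> ancestor ops b y -> ancestor ops a b \/ ancestor ops b a.
Proof.
elim=> [|y0 p e H IH] H2; first by right.
case: H2 e => [|y1 p' e' H'] e; first by left; apply: ancestor_up e H.
by rewrite e in e'; case: e' => ep; rewrite -ep in H'; apply: IH.
Qed.

Lemma upS ops k y : up ops k.+1 y = obind (up ops k) (parent ops y).
Proof.
elim: k y => [|k IH] y /=; first by case: (parent ops y).
by rewrite -/(up ops k.+1 y) IH; case: (parent ops y).
Qed.

Lemma in_subtree_ancestor ops x y : in_subtree ops x y -> ancestor ops x y.
Proof.
case/existsP => -[k _] /= /eqP; elim: k x => [|k IH] x /=.
  by case=> ->; apply: ancestor_refl.
case e: (up ops k y) => [m|] //= pm.
exact: ancestor_trans (ancestor_parent pm) (IH _ e).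
Qed.

Definition hits_subtree (ops : seq op) (j y : nat) : Prop :=
  exists2 w0, w0 \in incl_simplex (nth dflt_op ops j) &
    exists2 y0, roots (st_at ops j.+1) w0 = Some y0 & ancestor ops y y0.

Lemma hits_subtree_ancestor ops j x y :
  ancestor ops x y -> hits_subtree ops j y -> hits_subtree ops j x.
Proof.
move=> xy [w0 w0j [y0 r0 y_y0]]; exists w0 => //; exists y0 => //.
exact: ancestor_trans xy y_y0.
Qed.

Definition incl_sep (ops : seq op) (t a b : nat) : {fset nat} :=
  [fset j in iota 0 t | [&& is_incl (nth dflt_op ops j), a \in img ops j t
                          & b \notin img ops j t]].

Lemma in_incl_sep ops t a b j : (j \in incl_sep ops t a b) =
  [&& j < t, is_incl (nth dflt_op ops j), a \in img ops j t & b \notin img ops j t].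
Proof. by rewrite !inE mem_iota. Qed.

Definition charged (ops : seq op) (x : nat) (U : {fset nat}) : Prop :=
  forall j, j \in U ->
  [/\ j < x, is_incl (nth dflt_op ops j), hits_subtree ops j x &
      exists2 w, roots (st_at ops x.+1) w = Some x & w \in img ops j x.+1].

Section Tower.

Variable ops : seq op.
Hypothesis V : valid_tower ops.

Let inv t : t <= size ops -> tower_inv ops t := tower_inv_all V (t := t).

Lemma contr_valid t u v : t < size ops -> nth dflt_op ops t = Contr u v ->
  [/\ u != v, u \in verts (Kc ops t) & v \in verts (Kc ops t)].
Proof. by move=> tn Ho; have := V tn; rewrite Ho. Qed.

Lemma dead_neq_surv t u v : t < size ops -> nth dflt_op ops t = Contr u v ->
  dead (st_at ops t) u v != surv (st_at ops t) u v.
Proof.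
move=> tn /(contr_valid tn) [uv _ _].
by case: (dead_survP (st_at ops t) u v) => -[-> ->]; rewrite // eq_sym.
Qed.

(* The naming convention gives the dead vertex the smaller closed star, which
   is what bounds the cost on either side. *)
Lemma cost_contr_le i u v : i < size ops -> nth dflt_op ops i = Contr u v ->
  cost ops i <= 2 * #|` star_wo (Kc ops i) u v| /\
  cost ops i <= 2 * #|` star_wo (Kc ops i) v u|.
Proof.
move=> isz Ho; have /inv [Kc_i Kh_i _ _ _ _ _ _ _] := ltnW isz.
have [_ uK vK] := contr_valid isz Ho; have dz := dead_neq_surv isz Ho.
rewrite /cost Ho /= Ho /= -/(st_at ops i); rewrite /Kc in Kc_i Kh_i uK vK *.
set s := st_at ops i in Kc_i Kh_i uK vK dz *.
set d := dead s u v in dz *; set z := surv s u v in dz *.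
have duv : (d = u /\ z = v) \/ (d = v /\ z = u) by exact: dead_survP.
have [dK zK] : d \in verts (K s) /\ z \in verts (K s) by case: duv => -[-> ->].
have new_le := card_cone_new Kc_i Kh_i z dK.
have dz_le : #|` cstar_wo (K s) d z| <= #|` cstar_wo (K s) z d|.
  apply: card_cstar_wo_mono => //.
  by rewrite -(ActSt_cstar Kc_i Kh_i dK) -(ActSt_cstar Kc_i Kh_i zK) card_ActSt_dead_surv.
have zd : z != d by rewrite eq_sym.
have [le_d le_z] := (card_cstar_wo (K s) dz, card_cstar_wo (K s) zd).
by case: duv => -[<- <-]; split; apply: leq_trans new_le _ => //; apply: leq_trans dz_le _.
Qed.

Lemma parent_of_par t y p : t <= size ops ->
  par (st_at ops t) y = Some p -> parent ops y = Some p.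
Proof.
move=> tn h; rewrite /parent -(subnK tn).
have : size ops - t + t <= size ops by rewrite subnK.
elim: (size ops - t) => [|n IH] hn; first by rewrite add0n.
have hn' : n + t <= size ops by apply: ltnW.
rewrite addSn /=; case: (nth dflt_op ops (n + t)) => [sg|u v] /=; first exact: IH.
have e := IH hn'; have [_ _ noroot _] := inv_par (inv hn') e.
by rewrite e !(eq_sym (Some y)) (negbTE (noroot _)) (negbTE (noroot _)).
Qed.

Lemma parent_contr y p : parent ops y = Some p ->
  [/\ y < p, p < size ops & exists u v, nth dflt_op ops p = Contr u v /\
     (roots (st_at ops p) u = Some y \/ roots (st_at ops p) v = Some y)].
Proof. by move=> h; have [yp pn _ ex] := inv_par (inv (leqnn _)) h. Qed.

Lemma root_contr_parent p u v y : p < size ops -> nth dflt_op ops p = Contr u v ->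
  roots (st_at ops p) u = Some y \/ roots (st_at ops p) v = Some y ->
  parent ops y = Some p.
Proof.
move=> pn Ho h; apply: (@parent_of_par p.+1) => //=; rewrite Ho /=.
by case: (dead_survP (st_at ops p) u v) => -[-> ->]; case: h => ->; rewrite eqxx ?orbT.
Qed.

Lemma ancestor_in_subtree x y : x < size ops -> ancestor ops x y -> in_subtree ops x y.
Proof.
move=> xn a; suff [k [hk hl]] : exists k, up ops k y = Some x /\ k + y <= x.
  have kl : k < (size ops).+1.
    by rewrite ltnS (leq_trans (leq_addr y k)) // (leq_trans hl) // ltnW.
  by apply/existsP; exists (Ordinal kl); rewrite /= hk.
elim: a => [|y' p e _ [k [hk hl]]]; first by exists 0.
exists k.+1; rewrite upS e /= hk; split => //.
have [yp _ _] := parent_contr e.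
by apply: leq_trans hl; rewrite addSnnS leq_add2l.
Qed.

Lemma root_of_vertex t w : t <= size ops ->
  w \in verts (Kc ops t) -> exists y, roots (st_at ops t) w = Some y.
Proof.
move=> tn wv; have := inv_roots (inv tn) w; rewrite wv.
by case: (roots _ w) => // y _; exists y.
Qed.

Lemma img_verts j t w : j < t -> t <= size ops ->
  is_incl (nth dflt_op ops j) -> w \in img ops j t -> w \in verts (Kc ops t).
Proof.
by move=> jt tn ij wi; apply/vertsP; exists (img ops j t); rewrite ?(inv_img (inv tn)).
Qed.

Lemma incl_vertex_fresh t sg w : t < size ops -> nth dflt_op ops t = Incl sg ->
  #|` sg| == 1 -> w \in verts (Kc ops t) -> w \notin sg.
Proof.
move=> tn Ho /eqP h1 wv; have := V tn; rewrite Ho => -[_ _ _ fresh].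
by apply: contraL wv => ws; apply: fresh.
Qed.

Lemma root_img_until_parent j t p w y : j < t -> t <= p -> p <= size ops ->
  is_incl (nth dflt_op ops j) -> roots (st_at ops t) w = Some y -> w \in img ops j t ->
  parent ops y = Some p -> roots (st_at ops p) w = Some y /\ w \in img ops j p.
Proof.
move=> jt tp pn ij rw wi py; rewrite -(subnKC tp).
have : t + (p - t) <= p by rewrite subnKC.
elim: (p - t) => [|n IH] hn; first by rewrite addn0.
have hn' : t + n < p by rewrite -addnS.
have [r1 i1] := IH (ltnW hn').
have tn : t + n < size ops by apply: leq_trans hn' pn.
have jt' : j < t + n by apply: leq_trans jt (leq_addr _ _).
have wv := img_verts jt' (ltnW tn) ij i1.
rewrite addnS img_step // /=.
case Ho: (nth dflt_op ops (t + n)) => [sg|u v] /=.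
  case: ifP => [/andP[h1 ws]|_] //.
  by move: (incl_vertex_fresh tn Ho h1 wv); rewrite ws.
set s := st_at ops (t + n).
case: (boolP ((w == dead s u v) || (w == surv s u v))) => hw.
  move: (root_contr_parent tn Ho (root_dead_surv hw r1)); rewrite py => -[e].
  by rewrite e ltnn in hn'.
move: hw; rewrite negb_or => /andP[wd wz]; rewrite (negbTE wd) (negbTE wz).
by rewrite in_phi ?i1 ?wd ?dead_neq_surv.
Qed.

Lemma img_root_hits_subtree j t w y : j < t -> t <= size ops ->
  is_incl (nth dflt_op ops j) -> w \in img ops j t -> roots (st_at ops t) w = Some y ->
  hits_subtree ops j y.
Proof.
elim: t w y => [//|t IH] w y jt tn ij.
case: (j =P t) => [<-|/eqP jt'].
  by rewrite img_self => wi rw; exists w => //; exists y => //; apply: ancestor_refl.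
have {jt'}jt : j < t by rewrite ltn_neqAle jt' -ltnS.
have tl : t < size ops by [].
rewrite img_step //=; case Ho: (nth dflt_op ops t) => [sg|u v] /= wi.
  have wv := img_verts jt (ltnW tl) ij wi.
  case: ifP => [/andP[h1 ws]|_]; last exact: IH jt (ltnW tl) ij wi.
  by rewrite (negbTE (incl_vertex_fresh tl Ho h1 wv)) in ws.
have dz := dead_neq_surv tl Ho; set s := st_at ops t in wi dz *.
move: wi; rewrite in_phi // => /andP[wd hw]; rewrite (negbTE wd).
case: (w =P surv s u v) => [wz [<-]|wz]; last first.
  by case/orP: hw => [wi|/andP[/eqP //]]; exact: IH jt (ltnW tl) ij wi.
have [w1 w1i w1dz] :
    exists2 w1, w1 \in img ops j t & (w1 == dead s u v) || (w1 == surv s u v).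
  case/orP: hw => [wi|/andP[_ di]]; first by exists w => //; rewrite wz eqxx orbT.
  by exists (dead s u v); rewrite ?eqxx.
have [y1 r1] := root_of_vertex (ltnW tl) (img_verts jt (ltnW tl) ij w1i).
apply: hits_subtree_ancestor (IH _ _ jt (ltnW tl) ij w1i r1).
exact/ancestor_parent/(root_contr_parent tl Ho (root_dead_surv w1dz r1)).
Qed.

Lemma card_star_wo_incl_sep t a b : t <= size ops ->
  #|` star_wo (Kc ops t) a b| <= #|` incl_sep ops t a b|.
Proof.
move=> tn; apply: (@leq_trans #|` [fset img ops j t | j in incl_sep ops t a b]|);
  last exact: leq_imfset_card.
apply: fsubset_leq_card; apply/fsubsetP => s; rewrite !inE => /andP[sK /andP[hs bs]].
have [j jt /andP[ij /eqP e]] := inv_img_surj (inv tn) sK.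
by apply/imfsetP; exists j; rewrite // in_incl_sep jt ij e hs bs.
Qed.

Lemma img_contr_root x u v a j : x < size ops -> nth dflt_op ops x = Contr u v ->
  (a == u) || (a == v) -> j < x -> a \in img ops j x ->
  exists2 w, roots (st_at ops x.+1) w = Some x & w \in img ops j x.+1.
Proof.
move=> xn Ho hu jx ai; have dz := dead_neq_surv xn Ho.
set s := st_at ops x in dz *.
exists (surv s u v); first by rewrite /= Ho /= eq_sym (negbTE dz) eqxx.
rewrite img_step // /= Ho /= in_phi // eq_sym dz /= eqxx /=.
by case: (dead_survP s u v) => -[-> ->]; case/orP: hu => /eqP <-; rewrite ai ?orbT.
Qed.

(* Inclusions charged to a child [y] of [x] still contain, at step x, the
   vertex [a] labelling [y], whereas the new ones charged to [x] avoid it. *)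
Lemma charged_step x u v a b y U : x < size ops -> nth dflt_op ops x = Contr u v ->
  (a == u) && (b == v) || (a == v) && (b == u) ->
  roots (st_at ops x) a = Some y -> parent ops y = Some x -> charged ops y U ->
  [/\ cost ops x <= 2 * #|` incl_sep ops x b a|,
      #|` U `|` incl_sep ops x b a| = #|` U| + #|` incl_sep ops x b a| &
      charged ops x (U `|` incl_sep ops x b a)].
Proof.
move=> xn Ho hab ra py chU; have [yx _ _] := parent_contr py.
have hb : (b == u) || (b == v) by case/orP: hab => /andP[_ ->]; rewrite ?orbT.
have ha : (a == u) || (a == v) by case/orP: hab => /andP[-> _]; rewrite ?orbT.
have aU j : j \in U -> a \in img ops j x.
  move=> /chU [jy ij _ [w rw wi]].
  have [rw' wi'] := root_img_until_parent (leqW jy) yx (ltnW xn) ij rw wi py.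
  by rewrite -(inv_roots_inj (inv (ltnW xn)) rw' ra).
split.
- apply: leq_trans (leq_mul (leqnn 2) (card_star_wo_incl_sep b a (ltnW xn))).
  have [c1 c2] := cost_contr_le xn Ho.
  by case/orP: hab => /andP[/eqP -> /eqP ->].
- rewrite -cardfsUI (_ : U `&` _ = fset0) ?cardfs0 ?addn0 //; apply/fsetP => j.
  rewrite in_fsetI in_fset0 in_incl_sep; apply/negP => /andP[/aU ai /and4P[_ _ _]].
  by rewrite ai.
move=> j /fsetUP[jU|]; last rewrite in_incl_sep => /and4P[jx ij bi _].
  have [jy ij bj _] := chU j jU; split => //.
  - exact: ltn_trans jy yx.
  - exact: hits_subtree_ancestor (ancestor_parent py) bj.
  - exact: img_contr_root xn Ho ha (ltn_trans jy yx) (aU j jU).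
split => //; last exact: img_contr_root xn Ho hb jx bi.
have [r rb] := root_of_vertex (ltnW xn) (img_verts jx (ltnW xn) ij bi).
have pr : parent ops r = Some x.
  by apply: (root_contr_parent xn Ho); case/orP: hb => /eqP <-; [left|right].
apply: hits_subtree_ancestor (ancestor_parent pr) _.
exact: img_root_hits_subtree jx (ltnW xn) ij bi rb.
Qed.

Lemma charged_node x : is_node ops x ->
  exists U, cost ops x <= 2 * #|` U| /\ charged ops x U.
Proof.
move=> /andP[xn _]; case Ho: (nth dflt_op ops x) => [sg|u v].
  by exists fset0; rewrite /cost Ho; split => // j; rewrite in_fset0.
have [_ uK _] := contr_valid xn Ho.
exists (incl_sep ops x u v); split.
  have [c _] := cost_contr_le xn Ho.
  exact: leq_trans c (leq_mul (leqnn 2) (card_star_wo_incl_sep u v (ltnW xn))).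
move=> j; rewrite in_incl_sep => /and4P[jx ij ui _]; split => //.
  have [r ru] := root_of_vertex (ltnW xn) uK.
  have pr : parent ops r = Some x by apply: (root_contr_parent xn Ho); left.
  apply: hits_subtree_ancestor (ancestor_parent pr) _.
  exact: img_root_hits_subtree jx (ltnW xn) ij ui ru.
by apply: (img_contr_root xn Ho _ jx ui); rewrite eqxx.
Qed.

Lemma charged_path p : ascending ops p ->
  exists U, path_cost ops p <= 2 * #|` U| /\ charged ops (endpoint p) U.
Proof.
case/andP => /andP[]; rewrite /endpoint.
elim/last_ind: p => [//|q x IH] _; rewrite all_rcons => /andP[xnode qnode].
case: q IH qnode => [|y0 q'] IH qnode.
  by have [U [c chU]] := charged_node xnode; exists U; rewrite /path_cost /= big_seq1.
rewrite /= rcons_path => /andP[qs /eqP]; set y := last y0 q' => py.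
have [U [c chU]] := IH isT qnode qs.
have [yx xn [u [v [Ho hr]]]] := parent_contr py.
suff [a [b [hab ra]]] : exists a b, ((a == u) && (b == v) || (a == v) && (b == u)) /\
    roots (st_at ops x) a = Some y.
  have [c1 e ch] := charged_step xn Ho hab ra py chU.
  exists (U `|` incl_sep ops x b a); rewrite last_rcons; split => //.
  by rewrite /path_cost -cats1 -cat_cons big_cat big_seq1 e mulnDr leq_add.
by case: hr => ?; [exists u, v | exists v, u]; rewrite !eqxx ?orbT.
Qed.

Lemma card_charged_E x U : is_node ops x -> charged ops x U -> #|` U| <= size (E ops x).
Proof.
move=> /andP[xn _] chU; apply: uniq_leq_size; first exact: fset_uniq.
move=> j jU; have [jx ij [w0 w0s [y0 r0 a0]] _] := chU j jU.
rewrite /E mem_filter mem_iota add0n (ltn_trans jx xn) andbT /in_E.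
move: ij w0s r0; rewrite [st_at ops j.+1]/=.
case: (nth dflt_op ops j) => [sg|] //= _ w0s r0.
rewrite andbT; apply/existsP; exists [` w0s]; rewrite /= r0.
exact: ancestor_in_subtree xn a0.
Qed.

Lemma asc_endpoint_node p : ascending ops p -> is_node ops (endpoint p).
Proof.
case/andP=> /andP[]; case: p => [//|a p'] _ pn _.
by apply: (allP pn); rewrite /endpoint /= mem_last.
Qed.

Lemma path_cost_le p : ascending ops p ->
  path_cost ops p <= 2 * size (E ops (endpoint p)).
Proof.
move=> asc; have [U [c chU]] := charged_path asc.
by apply: leq_trans c _; rewrite leq_mul2l card_charged_E ?asc_endpoint_node ?orbT.
Qed.

Lemma card_incl_le_dim j sg : j < size ops -> nth dflt_op ops j = Incl sg ->
  #|` sg| <= (tower_dim ops).+1.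
Proof.
move=> jn Ho; have sK : sg \in Kc ops j.+1.
  by have := inv_img (inv jn) (ltnSn j); rewrite img_self Ho; apply.
rewrite -add1n -leq_subLR /tower_dim.
apply: leq_trans (leq_bigmax (Ordinal (jn : j.+1 < (size ops).+1))) => /=.
exact: (leq_bigmax_seq sg sK).
Qed.

Lemma independent_subtree_le1 P y : independent ops P ->
  count (fun p => in_subtree ops (endpoint p) y) P <= 1.
Proof.
case/andP => /andP[/allP asc uniqP] /allP indep.
apply: (count_le1 uniqP) => p q pP qP hp hq.
have [np nq] := (asc_endpoint_node (asc p pP), asc_endpoint_node (asc q qP)).
have := indep p pP; move/allP/(_ q qP); rewrite negb_and negbK => hpq.
have := indep q qP; move/allP/(_ p pP); rewrite negb_and negbK => hqp.
case: (ancestor_total (in_subtree_ancestor hp) (in_subtree_ancestor hq)) => h.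
  by case/orP: hpq => [/eqP //|]; rewrite (ancestor_in_subtree (proj1 (andP np)) h).
by case/orP: hqp => [/eqP -> //|]; rewrite (ancestor_in_subtree (proj1 (andP nq)) h).
Qed.

Lemma sum_in_E_le P j : independent ops P -> j < size ops ->
  \sum_(p <- P) in_E ops (endpoint p) j <= is_incl (nth dflt_op ops j) * (tower_dim ops).+1.
Proof.
move=> indP jn; rewrite /in_E; case Ho: (nth dflt_op ops j) => [sg|]; last by rewrite big1.
rewrite mul1n; apply: leq_trans (card_incl_le_dim jn Ho).
set F := fun (p : seq nat) (w : nat) => if roots (st_at ops j.+1) w is Some y
   then in_subtree ops (endpoint p) y else false.
apply: (@leq_trans (\sum_(p <- P) \sum_(w <- sg) (F p w : nat))).
  apply: leq_sum_seq => p _; case: existsP => [[w hw]|_] //=.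
  by rewrite lt0n sum_nat_seq_neq0; apply/hasP; exists (val w); rewrite ?fsvalP //= /F hw.
rewrite exchange_big card_fset_sum1; apply: leq_sum_seq => w _.
rewrite -count_sum /F; case: (roots _ w) => [y|]; last by rewrite count_pred0.
exact: independent_subtree_le1.
Qed.

Lemma set_cost_le P : independent ops P ->
  set_cost ops P <= 2 * (tower_dim ops).+1 * n_incl ops.
Proof.
move=> indP; have /allP asc : all (ascending ops) P by case/andP: indP => /andP[].
apply: (@leq_trans (\sum_(p <- P) 2 * size (E ops (endpoint p)))).
  by apply: leq_sum_seq => p pP; apply: path_cost_le (asc p pP).
rewrite -big_distrr -mulnA leq_mul2l /=.
under eq_bigr do rewrite size_filter count_sum.
rewrite exchange_big /=.
apply: (@leq_trans (\sum_(j <- iota 0 (size ops))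
                      is_incl (nth dflt_op ops j) * (tower_dim ops).+1)).
  by apply: leq_sum_seq => j; rewrite mem_iota add0n => /andP[_ jn]; apply: sum_in_E_le.
rewrite -big_distrl /= mulnC leq_mul2l /n_incl -[in count _ ops](mkseq_nth dflt_op ops).
by rewrite /mkseq count_map count_sum leqnn orbT.
Qed.

End Tower.

Unset Implicit Arguments.

Theorem lemma9 (ops : seq op) :
  valid_tower ops ->
  (forall p : seq nat, ascending ops p ->
     path_cost ops p <= 2 * size (E ops (endpoint p))) /\
  (forall P : seq (seq nat), independent ops P ->
     set_cost ops P <= 2 * (tower_dim ops).+1 * n_incl ops).
Proof. by move=> V; split => [p|P]; [exact: path_cost_le | exact: set_cost_le]. Qed.
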